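(* Let $m\ge2$ and let $a_1,a_2,b_1,b_2,b_3,c_1,\dots,c_{2m}$ be real with $a_1>a_2$, $b_1,b_2,b_3$ pairwise distinct, $c_1>c_2>\dots>c_{2m}$, and $ma_1+ma_2=b_1+(m-1)b_2+mb_3+\sum_{i=1}^{2m}c_i$. Let $\langle\cdot,\cdot\rangle$ be the form on $\mathbb{R}^{2m}$ defined in the context (assumed well defined). Then $\langle\cdot,\cdot\rangle$ is sign-definite if and only if one of the following six systems holds: (1) $b_1>b_3>b_2$; $p^{31}_{m-1}>0>p^{31}_m$; $p^{32}_{2m-1}>0>p^{32}_{2m}$; $q_{i,2m-1-i}>0>q_{i,2m-i}$ for $i=1,\dots,m-1$. (2) $b_1>b_2>b_3$; $0>p^{31}_1$; $p^{32}_m>0>p^{32}_{m+1}$; $q_{i,2m-i}>0>q_{i,2m+1-i}$ for $i=1,\dots,m-1$; $0>q_{m,m+1}$. (3) $b_2>b_1>b_3$; $0>p^{31}_1$; $p^{32}_m>0>p^{32}_{m+1}$; $q_{i,2m+1-i}>0>q_{i+1,2m+1-i}$ for $i=1,\dots,m-1$; $q_{m,m+1}>0$. (4) $b_2>b_3>b_1$; $p^{31}_1>0>p^{31}_2$; $p^{32}_{m+1}>0>p^{32}_{m+2}$; $q_{i,2m+2-i}>0>q_{i+1,2m+2-i}$ for $i=2,\dots,m$. (5) $b_3>b_2>b_1$; $p^{31}_m>0>p^{31}_{m+1}$; $p^{32}_{2m}>0$; $q_{i,2m+1-i}>0>q_{i+1,2m+1-i}$ for $i=1,\dots,m-1$;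 $q_{m,m+1}>0$. (6) $b_3>b_1>b_2$; $p^{31}_m>0>p^{31}_{m+1}$; $p^{32}_{2m}>0$; $q_{i,2m-i}>0>q_{i,2m+1-i}$ for $i=1,\dots,m-1$; $0>q_{m,m+1}$. If $\epsilon\langle\cdot,\cdot\rangle$ is positive-definite for $\epsilon=\pm1$, then $\epsilon=\mathrm{sign}((b_1-b_2)(b_1-b_3))$. In each case, the inequalities between $b_1,b_2,b_3$ are implied by the other inequalities of that case.
   Context: Notation: $p_i^{jk}=c_i+b_j-a_k$, $q_{ij}=c_i+c_j+b_2+b_3-a_1-a_2$; empty products are $1$. ${\bf C}$ is the $2m\times2m$ lower-triangular matrix with $C_{11}=c_{2m}$, $C_{1+i,1+i}=c_{2m-i}$ ($1\le i\le m-1$), $C_{m+i,m+i}=c_{m+1-i}$ ($1\le i\le m$), $C_{1+i,1}=-\frac{\prod_{k=1}^i q_{k,2m-i}}{\prod_{k=2m+1-i}^{2m-1}(c_{2m-i}-c_k)}$ ($1\le i\le m-1$), $C_{m+i,1}=-p^{32}_{m+1-i}\frac{\prod_{k=m+1}^{m-1+i}q_{m+1-i,k}}{\prod_{k=m+2-i}^m(c_{m+1-i}-c_k)}$ ($1\le i\le m$), $C_{m+i,1+j}=(-1)^{m+1-j}p^{32}_{m+1-i}\frac{\prod_{k=m+1,k\ne2m-j}^{m-1+i}q_{m+1-i,k}\prod_{k=j+1,k\ne m+1-i}^m q_{k,2m-j}}{\prod_{k=m+2-i}^m(c_{m+1-i}-c_k)\prod_{k=m+1}^{2m-1-j}(c_k-c_{2m-j})}$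 ($1\le i\le m$, $1\le j\le m-1$), all other entries $0$. For $i=1,\dots,2m$, ${\bf v}_i$ is the eigenvector of ${\bf C}$ with eigenvalue $c_i$ whose first $2m-i$ coordinates vanish and whose $(2m+1-i)$-th coordinate is $1$. The form is defined by $\langle{\bf v}_i,{\bf v}_j\rangle=0$ ($i\ne j$) and $\langle{\bf v}_i,{\bf v}_i\rangle=\frac{\prod_{k=i+1}^{2m}(c_i-c_k)}{\prod_{k=1}^{i-1}(c_i-c_k)}\cdot\frac{\prod_{k=2m+1-i,k\ne i}^{2m}q_{ik}}{\prod_{k=1,k\ne i}^{2m-i}q_{ik}}$ times $p^{31}_i/p^{32}_i$ if $i\le m$ and times $p^{31}_ip^{32}_i$ if $i>m$; it is well defined when no denominator vanishes. Sign-definite means positive-definite or negative-definite. *)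

From HB Require Import structures.
From mathcomp Require Import all_boot all_order all_algebra.
Set Implicit Arguments. Unset Strict Implicit. Unset Printing Implicit Defensive.
Import Order.TTheory GRing.Theory Num.Theory.
Local Open Scope ring_scope.

(* All index conventions are 1-based on nat: c i for i = 1..2m.
   Every definition takes the full parameter list
   (m : nat) (a1 a2 b1 b2 b3 : R) (c : nat -> R). *)

Definition p31 (R : realFieldType) (m : nat) (a1 a2 b1 b2 b3 : R) (c : nat -> R)
  (i : nat) : R := c i + b3 - a1.
Definition p32 (R : realFieldType) (m : nat) (a1 a2 b1 b2 b3 : R) (c : nat -> R)
  (i : nat) : R := c i + b3 - a2.
Definition q (R : realFieldType) (m : nat) (a1 a2 b1 b2 b3 : R) (c : nat -> R)
  (i j : nat) : R := c i + c j + b2 + b3 - a1 - a2.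

(* Entry (r, s) (1-based) of the 2m x 2m lower-triangular matrix C. *)
Definition Centry (R : realFieldType) (m : nat) (a1 a2 b1 b2 b3 : R) (c : nat -> R)
  (r s : nat) : R :=
  let q := q m a1 a2 b1 b2 b3 c in
  let p32 := p32 m a1 a2 b1 b2 b3 c in
  if (r == s) then
    (if r == 1%N then c (2 * m)%N
     else if (2 <= r <= m)%N then c (2 * m - (r - 1))%N
     else if (m + 1 <= r <= 2 * m)%N then c (m + 1 - (r - m))%N
     else 0)
  else if (s == 1%N) && (2 <= r <= m)%N then
    let i := (r - 1)%N in
    - ((\prod_(1 <= k < i.+1) q k (2 * m - i)%N) /
       (\prod_((2 * m + 1 - i)%N <= k < (2 * m)%N) (c (2 * m - i)%N - c k)))
  else if (s == 1%N) && (m + 1 <= r <= 2 * m)%N then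
    let i := (r - m)%N in
    - (p32 (m + 1 - i)%N *
       ((\prod_((m + 1)%N <= k < (m + i)%N) q (m + 1 - i)%N k) /
        (\prod_((m + 2 - i)%N <= k < m.+1) (c (m + 1 - i)%N - c k))))
  else if (m + 1 <= r <= 2 * m)%N && (2 <= s <= m)%N then
    let i := (r - m)%N in
    let j := (s - 1)%N in
    (-1) ^+ (m + 1 - j)%N * p32 (m + 1 - i)%N *
    ((\prod_((m + 1)%N <= k < (m + i)%N | k != (2 * m - j)%N) q (m + 1 - i)%N k) *
     (\prod_((j + 1)%N <= k < m.+1 | k != (m + 1 - i)%N) q k (2 * m - j)%N) /
     ((\prod_((m + 2 - i)%N <= k < m.+1) (c (m + 1 - i)%N - c k)) *
      (\prod_((m + 1)%N <= k < (2 * m - j)%N) (c k - c (2 * m - j)%N))))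
  else 0.

Definition Cmat (R : realFieldType) (m : nat) (a1 a2 b1 b2 b3 : R) (c : nat -> R)
  : 'M[R]_(2 * m) := \matrix_(r, s) Centry m a1 a2 b1 b2 b3 c r.+1 s.+1.

(* Prescribed value <v_i, v_i>. *)
Definition dval (R : realFieldType) (m : nat) (a1 a2 b1 b2 b3 : R) (c : nat -> R)
  (i : nat) : R :=
  let q := q m a1 a2 b1 b2 b3 c in
  (\prod_((i + 1)%N <= k < (2 * m).+1) (c i - c k)) /
  (\prod_(1 <= k < i) (c i - c k)) *
  ((\prod_((2 * m + 1 - i)%N <= k < (2 * m).+1 | k != i) q i k) /
   (\prod_(1 <= k < (2 * m - i).+1 | k != i) q i k)) *
  (if (i <= m)%N then p31 m a1 a2 b1 b2 b3 c i / p32 m a1 a2 b1 b2 b3 c i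
   else p31 m a1 a2 b1 b2 b3 c i * p32 m a1 a2 b1 b2 b3 c i).

(* The order conditions bordk and the remaining conditions restk of case (k). *)
Definition bord1 (R : realFieldType) (m : nat) (a1 a2 b1 b2 b3 : R) (c : nat -> R) :=
  b1 > b3 /\ b3 > b2.
Definition rest1 (R : realFieldType) (m : nat) (a1 a2 b1 b2 b3 : R) (c : nat -> R) :=
  let p31 := p31 m a1 a2 b1 b2 b3 c in let p32 := p32 m a1 a2 b1 b2 b3 c in
  let q := q m a1 a2 b1 b2 b3 c in
  [/\ p31 (m - 1)%N > 0, 0 > p31 m, p32 (2 * m - 1)%N > 0, 0 > p32 (2 * m)%N &
   forall i, (1 <= i <= m - 1)%N ->
     q i (2 * m - 1 - i)%N > 0 /\ 0 > q i (2 * m - i)%N].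
Definition bord2 (R : realFieldType) (m : nat) (a1 a2 b1 b2 b3 : R) (c : nat -> R) :=
  b1 > b2 /\ b2 > b3.
Definition rest2 (R : realFieldType) (m : nat) (a1 a2 b1 b2 b3 : R) (c : nat -> R) :=
  let p31 := p31 m a1 a2 b1 b2 b3 c in let p32 := p32 m a1 a2 b1 b2 b3 c in
  let q := q m a1 a2 b1 b2 b3 c in
  [/\ 0 > p31 1%N, p32 m > 0, 0 > p32 (m + 1)%N,
   (forall i, (1 <= i <= m - 1)%N ->
     q i (2 * m - i)%N > 0 /\ 0 > q i (2 * m + 1 - i)%N) &
   0 > q m (m + 1)%N].
Definition bord3 (R : realFieldType) (m : nat) (a1 a2 b1 b2 b3 : R) (c : nat -> R) :=
  b2 > b1 /\ b1 > b3.
Definition rest3 (R : realFieldType) (m : nat) (a1 a2 b1 b2 b3 : R) (c : nat -> R) :=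
  let p31 := p31 m a1 a2 b1 b2 b3 c in let p32 := p32 m a1 a2 b1 b2 b3 c in
  let q := q m a1 a2 b1 b2 b3 c in
  [/\ 0 > p31 1%N, p32 m > 0, 0 > p32 (m + 1)%N,
   (forall i, (1 <= i <= m - 1)%N ->
     q i (2 * m + 1 - i)%N > 0 /\ 0 > q (i + 1)%N (2 * m + 1 - i)%N) &
   q m (m + 1)%N > 0].
Definition bord4 (R : realFieldType) (m : nat) (a1 a2 b1 b2 b3 : R) (c : nat -> R) :=
  b2 > b3 /\ b3 > b1.
Definition rest4 (R : realFieldType) (m : nat) (a1 a2 b1 b2 b3 : R) (c : nat -> R) :=
  let p31 := p31 m a1 a2 b1 b2 b3 c in let p32 := p32 m a1 a2 b1 b2 b3 c in
  let q := q m a1 a2 b1 b2 b3 c in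
  [/\ p31 1%N > 0, 0 > p31 2%N, p32 (m + 1)%N > 0, 0 > p32 (m + 2)%N &
   forall i, (2 <= i <= m)%N ->
     q i (2 * m + 2 - i)%N > 0 /\ 0 > q (i + 1)%N (2 * m + 2 - i)%N].
Definition bord5 (R : realFieldType) (m : nat) (a1 a2 b1 b2 b3 : R) (c : nat -> R) :=
  b3 > b2 /\ b2 > b1.
Definition rest5 (R : realFieldType) (m : nat) (a1 a2 b1 b2 b3 : R) (c : nat -> R) :=
  let p31 := p31 m a1 a2 b1 b2 b3 c in let p32 := p32 m a1 a2 b1 b2 b3 c in
  let q := q m a1 a2 b1 b2 b3 c in
  [/\ p31 m > 0, 0 > p31 (m + 1)%N, p32 (2 * m)%N > 0,
   (forall i, (1 <= i <= m - 1)%N ->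
     q i (2 * m + 1 - i)%N > 0 /\ 0 > q (i + 1)%N (2 * m + 1 - i)%N) &
   q m (m + 1)%N > 0].
Definition bord6 (R : realFieldType) (m : nat) (a1 a2 b1 b2 b3 : R) (c : nat -> R) :=
  b3 > b1 /\ b1 > b2.
Definition rest6 (R : realFieldType) (m : nat) (a1 a2 b1 b2 b3 : R) (c : nat -> R) :=
  let p31 := p31 m a1 a2 b1 b2 b3 c in let p32 := p32 m a1 a2 b1 b2 b3 c in
  let q := q m a1 a2 b1 b2 b3 c in
  [/\ p31 m > 0, 0 > p31 (m + 1)%N, p32 (2 * m)%N > 0,
   (forall i, (1 <= i <= m - 1)%N ->
     q i (2 * m - i)%N > 0 /\ 0 > q i (2 * m + 1 - i)%N) &
   0 > q m (m + 1)%N].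

Definition bform (R : realFieldType) (n : nat) (G : 'M[R]_n) (x y : 'cV[R]_n) : R :=
  (x^T *m G *m y) 0 0.

Definition pos_definite (R : realFieldType) (n : nat) (G : 'M[R]_n) : Prop :=
  forall x : 'cV[R]_n, x != 0 -> 0 < bform G x x.
Definition neg_definite (R : realFieldType) (n : nat) (G : 'M[R]_n) : Prop :=
  forall x : 'cV[R]_n, x != 0 -> bform G x x < 0.
Definition sign_definite (R : realFieldType) (n : nat) (G : 'M[R]_n) : Prop :=
  pos_definite G \/ neg_definite G.

From HB Require Import structures.
From mathcomp Require Import all_boot all_order all_algebra.
From mathcomp Require Import zify ring lra.
Import Order.TTheory GRing.Theory Num.Theory.
Local Open Scope ring_scope.

(* The vectors v_2m, ..., v_1 form a unitriangular basis in which the Gram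
   matrix is diagonal, so the form is sign-definite iff all <v_i, v_i> have the
   same sign.  As c is decreasing, the sign of <v_i, v_i> is
   (-1)^(i - 1 + N_i + [p31_i < 0] + [p32_i < 0]), where N_i counts the k <> i
   with q_ik < 0.  Since q_ik decreases in i and in k, its sign is governed by
   thresholds T_i (q_ik > 0 iff k <= T_i) with k <= T_i <-> i <= T_k, and
   similarly for p31 and p32.  Constant parity forces
   N_i + [p31_i < 0] + [p32_i < 0] to grow by exactly one at each step; then
   T_i + i is determined by the signs of p31_i, p32_i and q_ii, and comparing
   the rows i and k of well-chosen pairs leaves exactly six threshold patterns,
   the six systems.  Conversely, each system fixes every sign.  Finally, the
   relation m a1 + m a2 = b1 + ... turns the sums of the q's along the
   antidiagonals into b2 - b1 or b3 - b1, which orders b1, b2, b3. *)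

Lemma sum_nat_bool_le (P : pred nat) a b : (\sum_(a <= j < b) P j <= b - a)%N.
Proof.
apply: leq_trans (_ : \sum_(a <= j < b) 1 <= _)%N; last by rewrite sum_nat_const_nat muln1.
by apply: leq_sum => j _; case: (P j).
Qed.

Lemma downclosedE (P : pred nat) n :
  (forall k k', (1 <= k <= k')%N -> (k' <= n)%N -> P k' -> P k) ->
  forall k, (1 <= k <= n)%N -> P k = (k <= \sum_(1 <= j < n.+1) P j)%N.
Proof.
elim: n => [|n IH] Pdown k /andP[k1 kn]; first by lia.
rewrite big_nat_recr //=; case Pn: (P n.+1).
  have -> : (\sum_(1 <= j < n.+1) P j = \sum_(1 <= j < n.+1) 1)%N.
    by apply: eq_big_nat => j /andP[j1 jn]; rewrite (Pdown j n.+1) //; lia.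
  by rewrite sum_nat_const_nat (Pdown k n.+1) //; lia.
have := sum_nat_bool_le P 1 n.+1; case: (ltnP n k) => kn' hle.
  by rewrite (_ : k = n.+1) ?Pn /=; lia.
by rewrite addn0 IH // => [j j' ? ? ?|]; [apply: Pdown; lia|lia].
Qed.

Lemma sum_nat_D1 (F : nat -> nat) [n i] : (1 <= i <= n)%N ->
  (\sum_(1 <= k < n.+1) F k = F i + \sum_(1 <= k < n.+1 | k != i) F k)%N.
Proof. by move=> hi; rewrite (bigD1_seq i) ?iota_uniq // mem_iota; lia. Qed.

Lemma sum_nat_gt n t : (\sum_(1 <= k < n.+1) (t < k : nat) = n - t)%N.
Proof.
by elim: n => [|n IH]; [rewrite big_geq|rewrite big_nat_recr //= IH; lia].
Qed.

Lemma sum_nat_gt_D1 n t i : (1 <= i <= n)%N ->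
  (\sum_(1 <= k < n.+1 | k != i) (t < k : nat) = n - t - (t < i))%N.
Proof. by move=> hi; have := sum_nat_D1 (fun k => (t < k : nat)) hi; rewrite sum_nat_gt; lia. Qed.

Section NatSums.
Context {R : numDomainType}.

Lemma sum_nat_reflect (F : nat -> R) s a b a' b' :
  (a <= b)%N -> (a' + b = s + 1)%N -> (b' + a = s + 1)%N ->
  \sum_(a <= i < b) F (s - i)%N = \sum_(a' <= j < b') F j.
Proof.
move=> ab ha' hb'; rewrite -{1}[a]add0n big_addn -[a']add0n big_addn big_nat_rev.
rewrite (_ : b' - a' = b - a)%N; last by lia.
by apply: eq_big_nat => i hi; congr F; lia.
Qed.

Lemma sumr_nat_gt0 (F : nat -> R) a b : (a < b)%N ->
  (forall i, (a <= i < b)%N -> 0 < F i) -> 0 < \sum_(a <= i < b) F i.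
Proof.
move=> ab F_gt0; rewrite big_ltn // ltr_wpDr ?F_gt0 ?leqnn //.
by rewrite big_nat_cond sumr_ge0 // => i /andP[hi _]; rewrite ltW // F_gt0 //; lia.
Qed.

Lemma sumr_nat_lt0 (F : nat -> R) a b : (a < b)%N ->
  (forall i, (a <= i < b)%N -> F i < 0) -> \sum_(a <= i < b) F i < 0.
Proof.
move=> ab F_lt0; rewrite -oppr_gt0 -sumrN sumr_nat_gt0 // => i hi.
by rewrite oppr_gt0 F_lt0.
Qed.

End NatSums.

Section SignOfProduct.
Context {R : realDomainType}.

Lemma sgr_prod (I : eqType) (r : seq I) (P : pred I) (F : I -> R) :
  {in r, forall x, P x -> F x != 0} ->
  Num.sg (\prod_(x <- r | P x) F x) = (-1) ^+ (\sum_(x <- r | P x) ((F x < 0)%R : nat))%N.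
Proof.
elim: r => [|x r IH] F0; first by rewrite !big_nil sgr1.
have {}IH := IH (fun y yr => F0 y (mem_behead (s := x :: r) yr)).
rewrite !big_cons; case: ifP => // Px.
rewrite sgrM exprD IH; congr (_ * _).
by case: ltgtP (F0 x (mem_head x r) Px) => // Fx _; [rewrite ltr0_sg|rewrite gtr0_sg].
Qed.

Lemma sgr_prod_nat a b (P : pred nat) (F : nat -> R) :
  (forall k, (a <= k < b)%N -> P k -> F k != 0) ->
  Num.sg (\prod_(a <= k < b | P k) F k) =
  (-1) ^+ (\sum_(a <= k < b | P k) ((F k < 0)%R : nat))%N.
Proof. by move=> F0; apply: sgr_prod => k; rewrite mem_index_iota; apply: F0. Qed.

End SignOfProduct.

Lemma same_sign_sgr {R : numDomainType} (w : nat -> R) (P : nat -> Prop) :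
  (forall i, P i -> 0 < w i) \/ (forall i, P i -> w i < 0) ->
  exists2 s : R, s != 0 & forall i, P i -> Num.sg (w i) = s.
Proof.
case=> w_sgn; [exists 1|exists (-1)]; rewrite ?oppr_eq0 ?oner_eq0 // => i /w_sgn.
  exact: gtr0_sg.
exact: ltr0_sg.
Qed.

Section Definiteness.
Context {R : realFieldType} {n : nat}.
Implicit Types (G : 'M[R]_n) (x y : 'cV[R]_n).

Lemma bformZ e G x y : bform (e *: G) x y = e * bform G x y.
Proof. by rewrite /bform -scalemxAr -scalemxAl mxE. Qed.

Lemma bform_congr (P : 'M[R]_n) G x y :
  bform (P^T *m G *m P) x y = bform G (P *m x) (P *m y).
Proof. by rewrite /bform trmx_mul !mulmxA. Qed.

Lemma pos_definite_congr (P : 'M[R]_n) G :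
  P \in unitmx -> pos_definite (P^T *m G *m P) <-> pos_definite G.
Proof.
move=> Pu; split=> Gpos x x0.
  rewrite -[x](mulKVmx Pu) -bform_congr Gpos //.
  by apply: contra_neq x0 => Px0; rewrite -(mulKVmx Pu x) Px0 mulmx0.
rewrite bform_congr Gpos //.
by apply: contra_neq x0 => Px0; rewrite -(mulKmx Pu x) Px0 mulmx0.
Qed.

Lemma bform_diag (d : 'rV[R]_n) x : bform (diag_mx d) x x = \sum_j d 0 j * x j 0 ^+ 2.
Proof. by rewrite /bform mul_mx_diag !mxE; apply: eq_bigr => j _; rewrite !mxE; ring. Qed.

Lemma pos_definite_diag (d : 'rV[R]_n) :
  pos_definite (diag_mx d) <-> forall j, 0 < d 0 j.
Proof.
split=> [dpos j | dpos x x0].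
  have ej0 : delta_mx j 0 != 0 :> 'cV[R]_n.
    by apply/eqP => /matrixP/(_ j 0)/eqP; rewrite !mxE !eqxx oner_eq0.
  have := dpos _ ej0; rewrite bform_diag (bigD1 j) //= big1 => [|k kj].
    by rewrite !mxE !eqxx expr1n mulr1 addr0.
  by rewrite mxE (negbTE kj) expr0n mulr0.
have [j xj] : exists j, x j 0 != 0.
  apply/existsP; apply: contraNT x0 => /existsPn x0.
  by apply/eqP/matrixP => r s; rewrite (ord1 s) mxE; apply/eqP/negPn.
rewrite bform_diag (bigD1 j) //= ltr_pwDl //; first by rewrite mulr_gt0 ?exprn_even_gt0.
by apply: sumr_ge0 => k _; rewrite mulr_ge0 ?sqr_ge0 ?ltW.
Qed.

Lemma mulmx_row_col p (A : 'M[R]_(n, p)) (B : 'M[R]_(p, n)) i j :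
  (A *m B) i j = (row i A *m col j B) 0 0.
Proof. by rewrite !mxE; apply: eq_bigr => k _; rewrite !mxE. Qed.

Definition diagonalizes (v : nat -> 'cV[R]_n) G (w : nat -> R) :=
  forall i j, (1 <= i <= n)%N -> (1 <= j <= n)%N ->
  bform G (v i) (v j) = if i == j then w i else 0.

Section UnitriangularBasis.
Context {v : nat -> 'cV[R]_n}.
Hypothesis v_zero : forall i, (1 <= i <= n)%N ->
  forall r : 'I_n, (r < n - i)%N -> v i r 0 = 0.
Hypothesis v_one : forall i, (1 <= i <= n)%N ->
  forall r : 'I_n, nat_of_ord r = (n - i)%N -> v i r 0 = 1.

Definition basis_mx : 'M[R]_n := \matrix_(r, j) v (n - j) r 0.

Lemma basis_mx_unit : basis_mx \in unitmx.
Proof.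
rewrite unitmxE det_trig; last first.
  by apply/is_trig_mxP => r j rj; rewrite mxE v_zero //; have := ltn_ord j; lia.
rewrite (eq_bigr (fun _ => 1)) ?prodr_const ?expr1n ?unitr1 // => j _.
by rewrite mxE v_one //; have := ltn_ord j; lia.
Qed.

Lemma basis_mx_congr_diag [G] [w : nat -> R] :
  diagonalizes v G w ->
  basis_mx^T *m G *m basis_mx = diag_mx (\row_j w (n - j)%N).
Proof.
move=> Gv; apply/matrixP => j j'.
have vE (k : 'I_n) : col k basis_mx = v (n - k)%N.
  by apply/matrixP => r s; rewrite !mxE (ord1 s).
have -> : (basis_mx^T *m G *m basis_mx) j j' = bform G (v (n - j)) (v (n - j')).
  by rewrite mulmx_row_col row_mul -tr_col !vE.
rewrite Gv; try by have := ltn_ord j; have := ltn_ord j'; lia.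
rewrite !mxE; case: (eqVneq j j') => [->|jj']; first by rewrite !eqxx.
suff /negPf -> : (n - j)%N != (n - j')%N by [].
by apply: contra jj' => /eqP e; apply/eqP/ord_inj; have := ltn_ord j; have := ltn_ord j'; lia.
Qed.

Lemma pos_definite_diagonalized [G] [w : nat -> R] :
  diagonalizes v G w ->
  pos_definite G <-> forall i, (1 <= i <= n)%N -> 0 < w i.
Proof.
move=> Gv; rewrite -(pos_definite_congr _ G basis_mx_unit) (basis_mx_congr_diag Gv).
rewrite pos_definite_diag; split=> wpos i.
  move=> hi; have ni : (n - i < n)%N by lia.
  by have := wpos (Ordinal ni); rewrite mxE /= subKn //; lia.
by rewrite mxE; apply: wpos; have := ltn_ord i; lia.
Qed.

Lemma diagonalizesZ e [G] [w : nat -> R] :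
  diagonalizes v G w -> diagonalizes v (e *: G) (fun i => e * w i).
Proof. by move=> Gv i j hi hj; rewrite bformZ Gv //; case: (i == j); rewrite ?mulr0. Qed.

Lemma sign_definite_diagonalized [G] [w : nat -> R] :
  diagonalizes v G w ->
  sign_definite G <->
  (forall i, (1 <= i <= n)%N -> 0 < w i) \/ (forall i, (1 <= i <= n)%N -> w i < 0).
Proof.
move=> Gv; have negE : neg_definite G <-> pos_definite (- 1 *: G).
  by split=> Gneg x /Gneg; rewrite bformZ mulN1r oppr_gt0.
rewrite /sign_definite negE (pos_definite_diagonalized Gv).
rewrite (pos_definite_diagonalized (diagonalizesZ (-1) Gv)).
by split=> -[wsg|wsg]; [left|right|left|right] => i /wsg; rewrite ?mulN1r ?oppr_gt0.
Qed.

End UnitriangularBasis.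

End Definiteness.

(* An abstract form of the signs of the <v_i, v_i>: T i stands for the number
   of k with q_ik > 0, and P1, P2 for the numbers of k with p31_k > 0 and with
   p32_k > 0.  When no q_ik with k <> i vanishes, negq i counts the k <> i with
   q_ik < 0, and sign_exp i is the exponent of -1 in the sign of <v_i, v_i>. *)
Section ThresholdParity.
Local Open Scope nat_scope.
Variables (m : nat) (T : nat -> nat) (P1 P2 : nat).
Hypothesis m_ge2 : 2 <= m.
Hypothesis T_le : forall i, T i <= 2 * m.
Hypothesis T_sym : forall i k, 1 <= i <= 2 * m -> 1 <= k <= 2 * m ->
  (k <= T i) = (i <= T k).
Hypothesis P1_le_P2 : P1 <= P2.
Hypothesis P2_le : P2 <= 2 * m.

Definition negq i := 2 * m - 1 + (i <= T i) - T i.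
Definition negp i := (P1 < i) + (P2 < i).
Definition sign_exp i := i - 1 + negq i + negp i.

Hypothesis sign_exp_parity : forall i, 1 <= i <= 2 * m -> odd (sign_exp i) = odd (sign_exp 1).

Lemma T_nonincr i i' : 1 <= i <= i' -> i' <= 2 * m -> T i' <= T i.
Proof.
move=> hi hi'; case: (posnP (T i')) => [-> //|Ti'0].
have := T_sym i' (T i') ltac:(lia) ltac:(have := T_le i'; lia).
have := T_sym i (T i') ltac:(lia) ltac:(have := T_le i'; lia).
rewrite leqnn; lia.
Qed.

Lemma negq_nondecr i : 1 <= i < 2 * m -> negq i <= negq i.+1.
Proof.
move=> hi; have := T_nonincr i i.+1 ltac:(lia) ltac:(lia).
have := T_sym i i.+1 ltac:(lia) ltac:(lia); have := T_le i; rewrite /negq; lia.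
Qed.

Lemma negqp_step i : 1 <= i < 2 * m -> negq i + negp i < negq i.+1 + negp i.+1.
Proof.
move=> hi; have := sign_exp_parity i ltac:(lia); have := sign_exp_parity i.+1 ltac:(lia).
have := negq_nondecr i hi; rewrite /sign_exp /negp; lia.
Qed.

Lemma negqp_end : negq (2 * m) + negp (2 * m) <= 2 * m + (negq 1 + negp 1).
Proof.
have := T_sym 1 (2 * m) ltac:(lia) ltac:(lia); have := T_le 1; have := T_le (2 * m).
rewrite /negq /negp; lia.
Qed.

Lemma negqp_affine i : 1 <= i <= 2 * m -> negq i + negp i = negq 1 + negp 1 + i - 1.
Proof.
have steps j j' : 1 <= j -> j <= j' <= 2 * m ->
    negq j + negp j + (j' - j) <= negq j' + negp j'.
  move=> j1; elim: j' => [|j' IH] hj'; first lia.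
  case: (ltnP j j'.+1) => h; last by rewrite (_ : j'.+1 = j); lia.
  by have := IH ltac:(lia); have := negqp_step j' ltac:(lia); lia.
move=> hi; have := steps 1 i isT hi; have := steps i (2 * m) ltac:(lia) ltac:(lia).
have := sign_exp_parity (2 * m) ltac:(lia); have := negqp_end; rewrite /sign_exp; lia.
Qed.

Lemma T_affine i : 1 <= i <= 2 * m ->
  T i + (negq 1 + negp 1) + i = 2 * m + negp i + (i <= T i).
Proof. by move=> hi; have := negqp_affine i hi; have := T_le i; rewrite /negq; lia. Qed.

Lemma T_affine_pair i k : 1 <= i <= 2 * m -> 1 <= k <= 2 * m ->
  [/\ T i + (negq 1 + negp 1) + i = 2 * m + negp i + (i <= T i),
      T k + (negq 1 + negp 1) + k = 2 * m + negp k + (k <= T k)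
    & (k <= T i) = (i <= T k)].
Proof. by move=> hi hk; split; [apply: T_affine|apply: T_affine|apply: T_sym]. Qed.

Lemma negq_ends :
  [/\ negq 1 = 0 -> negq (2 * m) <= 2 * m - 2, 0 < negq 1 -> negq (2 * m) = 2 * m - 1
    & negq (2 * m) + negp (2 * m) = negq 1 + negp 1 + 2 * m - 1].
Proof.
have := negqp_affine (2 * m) ltac:(lia).
have := T_sym 1 (2 * m) ltac:(lia) ltac:(lia); have := T_le 1; have := T_le (2 * m).
rewrite /negq; split; lia.
Qed.

Lemma classify_P1_eq0 : P1 = 0 -> P2 = m /\ negq 1 <= 1.
Proof.
move=> P1_0; have [e1 e2 e3] := negq_ends.
have np1 : negp 1 = 1 + (P2 < 1) by rewrite /negp P1_0.
case: (eqVneq P2 0) => P2_0.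
  have : negp (2 * m) = 2 by rewrite /negp P1_0 P2_0; lia.
  lia.
case: (eqVneq P2 (2 * m)) => P2_2m.
  have : negp (2 * m) = 1 by rewrite /negp P1_0 P2_2m; lia.
  lia.
have np2m : negp (2 * m) = 2 by rewrite /negp; lia.
have {}np1 : negp 1 = 1 by rewrite np1; lia.
have hN : negq 1 <= 1 by lia.
case: (ltngtP P2 m) => hP; last by [].
- have npm : negp m = 2 by rewrite /negp; lia.
  have [hn|hn] : negq 1 = 0 \/ 0 < negq 1 by lia.
    have npm2 : negp (m + 2) = 2 by rewrite /negp; lia.
    by case: (T_affine_pair m (m + 2) ltac:(lia) ltac:(lia)); lia.
  have npm1 : negp (m + 1) = 2 by rewrite /negp; lia.
  by case: (T_affine_pair m (m + 1) ltac:(lia) ltac:(lia)); lia.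
- have npm1 : negp (m + 1) = 1 by rewrite /negp; lia.
  have [hn|hn] : negq 1 = 0 \/ 0 < negq 1 by lia.
    have npm : negp m = 1 by rewrite /negp; lia.
    by case: (T_affine_pair m (m + 1) ltac:(lia) ltac:(lia)); lia.
  have npm : negp (m - 1) = 1 by rewrite /negp; lia.
  by case: (T_affine_pair (m - 1) (m + 1) ltac:(lia) ltac:(lia)); lia.
Qed.

Lemma classify_P2_eq2m : 0 < P1 -> P2 = 2 * m -> P1 = m /\ negq 1 <= 1.
Proof.
move=> P1_gt0 P2_2m; have [e1 e2 e3] := negq_ends.
have np1 : negp 1 = 0 by rewrite /negp; lia.
case: (eqVneq P1 (2 * m)) => P1_2m.
  have : negp (2 * m) = 0 by rewrite /negp P1_2m P2_2m; lia.
  lia.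
have np2m : negp (2 * m) = 1 by rewrite /negp; lia.
have hN : negq 1 <= 1 by lia.
case: (ltngtP P1 m) => hP; last by [].
- have npm : negp m = 1 by rewrite /negp; lia.
  have [hn|hn] : negq 1 = 0 \/ 0 < negq 1 by lia.
    have npm2 : negp (m + 2) = 1 by rewrite /negp; lia.
    by case: (T_affine_pair m (m + 2) ltac:(lia) ltac:(lia)); lia.
  have npm1 : negp (m + 1) = 1 by rewrite /negp; lia.
  by case: (T_affine_pair m (m + 1) ltac:(lia) ltac:(lia)); lia.
- have npm1 : negp (m + 1) = 0 by rewrite /negp; lia.
  have [hn|hn] : negq 1 = 0 \/ 0 < negq 1 by lia.
    have npm : negp m = 0 by rewrite /negp; lia.
    by case: (T_affine_pair m (m + 1) ltac:(lia) ltac:(lia)); lia.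
  have npm : negp (m - 1) = 0 by rewrite /negp; lia.
  by case: (T_affine_pair (m - 1) (m + 1) ltac:(lia) ltac:(lia)); lia.
Qed.

Lemma classify_P2_lt2m : 0 < P1 -> P2 < 2 * m ->
  [/\ negq 1 = 0, P1 = 1 & P2 = m + 1] \/ [/\ negq 1 = 2, P1 = m - 1 & P2 = 2 * m - 1].
Proof.
move=> P1_gt0 P2_lt; have [e1 e2 e3] := negq_ends.
have np1 : negp 1 = 0 by rewrite /negp; lia.
have np2m : negp (2 * m) = 2 by rewrite /negp; lia.
have [hn|hn] : negq 1 = 0 \/ 0 < negq 1 by lia.
  have P1_1 : P1 = 1.
    apply/eqP; apply: contraT => P1_neq1.
    have np2 : negp 2 = 0 by rewrite /negp; lia.
    by case: (T_affine_pair 2 (2 * m) ltac:(lia) ltac:(lia)); lia.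
  left; split=> //; case: (ltngtP P2 (m + 1)) => hP //.
    have npm1 : negp (m + 1) = 2 by rewrite /negp; lia.
    have npm2 : negp (m + 2) = 2 by rewrite /negp; lia.
    by case: (T_affine_pair (m + 1) (m + 2) ltac:(lia) ltac:(lia)); lia.
  have npm : negp m = 1 by rewrite /negp; lia.
  have npm2 : negp (m + 2) = 1 by rewrite /negp; lia.
  by case: (T_affine_pair m (m + 2) ltac:(lia) ltac:(lia)); lia.
right; have hN : negq 1 = 2 by lia.
have P1_le : P1 <= m - 1.
  rewrite leqNgt; apply/negP => P1_gt.
  have npm1 : negp (m - 1) = 0 by rewrite /negp; lia.
  have npm : negp m = 0 by rewrite /negp; lia.
  by case: (T_affine_pair (m - 1) m ltac:(lia) ltac:(lia)); lia.
have P2_eq : P2 = 2 * m - 1.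
  apply/eqP; apply: contraT => P2_neq.
  have np : negp (2 * m - 1) = 2 by rewrite /negp; lia.
  by case: (T_affine_pair 1 (2 * m - 1) ltac:(lia) ltac:(lia)); lia.
split=> //; apply/eqP; apply: contraT => P1_neq.
have npm1 : negp (m - 1) = 1 by rewrite /negp; lia.
have npm : negp (m + 1) = 1 by rewrite /negp; lia.
by case: (T_affine_pair (m - 1) (m + 1) ltac:(lia) ltac:(lia)); lia.
Qed.

Definition antidiag N lo hi := forall i, lo <= i <= hi -> T i + i = N.

(* The six alternatives are the systems (1)-(6), in this order. *)
Lemma T_classification :
  [/\ P1 = m - 1, P2 = 2 * m - 1 & antidiag (2 * m - 1) 1 (m - 1)] \/
  [/\ P1 = 0, P2 = m, antidiag (2 * m) 1 (m - 1) & T m <= m] \/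
  [/\ P1 = 0, P2 = m & antidiag (2 * m + 1) 1 m] \/
  [/\ P1 = 1, P2 = m + 1, antidiag (2 * m + 2) 2 m & T (m + 1) <= m + 1] \/
  [/\ P1 = m, P2 = 2 * m & antidiag (2 * m + 1) 1 m] \/
  [/\ P1 = m, P2 = 2 * m, antidiag (2 * m) 1 (m - 1) & T m <= m].
Proof.
have affine_at i k : 1 <= i <= 2 * m -> negp i = k ->
    T i + (negq 1 + negp 1) + i = 2 * m + k + (i <= T i).
  by move=> hi <-; apply: T_affine.
case: (posnP P1) => [P1_0 | P1_gt0].
  have [P2_m hN] := classify_P1_eq0 P1_0.
  have np1 : negp 1 = 1 by rewrite /negp P1_0 P2_m; lia.
  have [hn|hn] : negq 1 = 1 \/ negq 1 = 0 by lia.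
    right; left; split=> // [i hi|]; last first.
      by have := affine_at m 1 ltac:(lia) ltac:(rewrite /negp; lia); lia.
    by have := affine_at i 1 ltac:(lia) ltac:(rewrite /negp; lia); lia.
  do 2 right; left; split=> // i hi.
  by have := affine_at i 1 ltac:(lia) ltac:(rewrite /negp; lia); lia.
have np1 : negp 1 = 0 by rewrite /negp; lia.
case: (ltngtP P2 (2 * m)) => [P2_lt | | P2_2m]; last first.
- have [P1_m hN] := classify_P2_eq2m P1_gt0 P2_2m.
  have [hn|hn] : negq 1 = 0 \/ negq 1 = 1 by lia.
    do 4 right; left; split=> // i hi.
    by have := affine_at i 0 ltac:(lia) ltac:(rewrite /negp; lia); lia.
  do 5 right; split=> // [i hi|].
    by have := affine_at i 0 ltac:(lia) ltac:(rewrite /negp; lia); lia.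
  by have := affine_at m 0 ltac:(lia) ltac:(rewrite /negp; lia); lia.
- by have := P2_le; lia.
case: (classify_P2_lt2m P1_gt0 P2_lt) => -[hn P1_eq P2_eq].
  do 3 right; left; split=> // [i hi|].
    by have := affine_at i 1 ltac:(lia) ltac:(rewrite /negp; lia); lia.
  by have := affine_at (m + 1) 1 ltac:(lia) ltac:(rewrite /negp; lia); lia.
left; split=> // i hi.
by have := affine_at i 0 ltac:(lia) ltac:(rewrite /negp; lia); lia.
Qed.

End ThresholdParity.

Section GramSigns.
Context {R : realFieldType} {m : nat} {a1 a2 b1 b2 b3 : R} {c : nat -> R}.
Hypothesis m_ge2 : (2 <= m)%N.
Hypothesis a2_lt_a1 : a2 < a1.
Hypothesis c_decr : forall i, (1 <= i < 2 * m)%N -> c i.+1 < c i.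

Local Notation Q := (q m a1 a2 b1 b2 b3 c).
Local Notation P31 := (p31 m a1 a2 b1 b2 b3 c).
Local Notation P32 := (p32 m a1 a2 b1 b2 b3 c).
Local Notation D := (dval m a1 a2 b1 b2 b3 c).

Lemma ltr_c i j : (1 <= i)%N -> (i < j <= 2 * m)%N -> c j < c i.
Proof.
move=> i1; elim: j => [|j IH] // /andP[ij j2m].
case: (ltnP i j) => h; last by rewrite (_ : i = j); [apply: c_decr|]; lia.
by apply: lt_trans (IH _) ; [apply: c_decr|]; lia.
Qed.

Lemma ler_c i j : (1 <= i)%N -> (i <= j <= 2 * m)%N -> c j <= c i.
Proof.
move=> i1 /andP[ij j2m]; case: (ltnP i j) => h; first by rewrite ltW ?ltr_c ?h.
by rewrite (_ : j = i) //; lia.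
Qed.

Lemma qC i k : Q i k = Q k i.
Proof. by rewrite /q; ring. Qed.

Lemma ler_q i i' k k' : (1 <= i <= i')%N -> (i' <= 2 * m)%N ->
  (1 <= k <= k')%N -> (k' <= 2 * m)%N -> Q i' k' <= Q i k.
Proof.
move=> hi hi' hk hk'; rewrite /q.
have := ler_c i i' ltac:(lia) ltac:(lia); have := ler_c k k' ltac:(lia) ltac:(lia); lra.
Qed.

Lemma ler_p31 i i' : (1 <= i <= i')%N -> (i' <= 2 * m)%N -> P31 i' <= P31 i.
Proof. by move=> hi hi'; rewrite /p31; have := ler_c i i' ltac:(lia) ltac:(lia); lra. Qed.

Lemma ler_p32 i i' : (1 <= i <= i')%N -> (i' <= 2 * m)%N -> P32 i' <= P32 i.
Proof. by move=> hi hi'; rewrite /p32; have := ler_c i i' ltac:(lia) ltac:(lia); lra. Qed.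

Lemma p31_lt_p32 i : P31 i < P32 i.
Proof. by rewrite /p31 /p32; have := a2_lt_a1; lra. Qed.

Lemma q_p31_p32 i k : Q i k = P31 i + P32 k + (b2 - b3).
Proof. by rewrite /q /p31 /p32; ring. Qed.

Definition qbound i := (\sum_(1 <= k < (2 * m).+1) (0 < Q i k)%R)%N.
Definition p31bound := (\sum_(1 <= k < (2 * m).+1) (0 < P31 k)%R)%N.
Definition p32bound := (\sum_(1 <= k < (2 * m).+1) (0 < P32 k)%R)%N.

Lemma q_gt0E i k : (1 <= i <= 2 * m)%N -> (1 <= k <= 2 * m)%N -> (0 < Q i k) = (k <= qbound i)%N.
Proof.
move=> hi; apply: (downclosedE (fun k => 0 < Q i k)) => j j' hj hj' /lt_le_trans; apply.
by apply: ler_q; lia.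
Qed.

Lemma p31_gt0E k : (1 <= k <= 2 * m)%N -> (0 < P31 k) = (k <= p31bound)%N.
Proof.
apply: (downclosedE (fun k => 0 < P31 k)) => j j' hj hj' /lt_le_trans; apply.
exact: ler_p31.
Qed.

Lemma p32_gt0E k : (1 <= k <= 2 * m)%N -> (0 < P32 k) = (k <= p32bound)%N.
Proof.
apply: (downclosedE (fun k => 0 < P32 k)) => j j' hj hj' /lt_le_trans; apply.
exact: ler_p32.
Qed.

Lemma qbound_le i : (qbound i <= 2 * m)%N.
Proof. by have := sum_nat_bool_le (fun k => 0 < Q i k) 1 (2 * m).+1; rewrite subn1. Qed.

Lemma p32bound_le : (p32bound <= 2 * m)%N.
Proof. by have := sum_nat_bool_le (fun k => 0 < P32 k) 1 (2 * m).+1; rewrite subn1. Qed.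

Lemma p31bound_le_p32bound : (p31bound <= p32bound)%N.
Proof.
apply: leq_sum => k _; case: (boolP (0 < P31 k)) => //= h.
by rewrite (lt_trans h (p31_lt_p32 k)).
Qed.

Lemma qbound_sym i k : (1 <= i <= 2 * m)%N -> (1 <= k <= 2 * m)%N ->
  (k <= qbound i)%N = (i <= qbound k)%N.
Proof. by move=> hi hk; rewrite -q_gt0E // -q_gt0E // qC. Qed.

Definition nondegenerate :=
  (forall i k, (1 <= i <= 2 * m)%N -> (1 <= k <= 2 * m)%N -> k != i -> Q i k != 0) /\
  (forall i, (1 <= i <= 2 * m)%N -> P31 i != 0 /\ P32 i != 0).

Definition qneg_count i := (\sum_(1 <= k < (2 * m).+1 | k != i) (Q i k < 0)%R)%N.

Definition dval_exp i := (i - 1 + qneg_count i + (P31 i < 0)%R + (P32 i < 0)%R)%N.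

Lemma nondegenerate_of_dval : (forall i, (1 <= i <= 2 * m)%N -> D i != 0) -> nondegenerate.
Proof.
move=> D0; split=> [i k hi hk ki | i hi]; have := D0 i hi;
  rewrite /dval !mulf_eq0 !negb_or !invr_eq0 -!andbA => /and5P[_ _ qC0 qD0 pf0].
  rewrite !prodf_seq_neq0 in qC0 qD0.
  case: (leqP k (2 * m - i)) => hki.
    have : k \in index_iota 1 (2 * m - i).+1 by rewrite mem_index_iota; lia.
    by move/(allP qD0); rewrite ki.
  have : k \in index_iota (2 * m + 1 - i) (2 * m).+1 by rewrite mem_index_iota; lia.
  by move/(allP qC0); rewrite ki.
by move: pf0; case: ifP => _; rewrite ?mulf_eq0 ?invr_eq0 negb_or => /andP.
Qed.

Section Nondegenerate.
Hypothesis nondeg : nondegenerate.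

Lemma qneg_countE i : (1 <= i <= 2 * m)%N -> qneg_count i = negq m qbound i.
Proof.
move=> hi; have q0 := nondeg.1 i _ hi.
have split_pos := sum_nat_D1 (fun k => (0 < Q i k)%R : nat) hi.
have split_all := sum_nat_D1 (fun k => 1%N) hi; rewrite sum_nat_const_nat in split_all.
have sign_sum : (qneg_count i + \sum_(1 <= k < (2 * m).+1 | k != i) (0 < Q i k)%R =
                 \sum_(1 <= k < (2 * m).+1 | k != i) 1)%N.
  rewrite -big_split /= big_nat_cond [in RHS]big_nat_cond.
  by apply: eq_bigr => k /andP[hk ki]; case: ltgtP (q0 k hk ki).
rewrite /negq -(q_gt0E i i hi hi); have := qbound_le i; rewrite /qbound in split_pos *; lia.
Qed.

Lemma q_lt0E i k : (1 <= i <= 2 * m)%N -> (1 <= k <= 2 * m)%N -> k != i ->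
  (Q i k < 0) = (qbound i < k)%N.
Proof.
by move=> hi hk ki; rewrite ltnNge -q_gt0E //; case: ltgtP (nondeg.1 i k hi hk ki).
Qed.

Lemma p31_lt0E i : (1 <= i <= 2 * m)%N -> (P31 i < 0) = (p31bound < i)%N.
Proof. by move=> hi; rewrite ltnNge -p31_gt0E //; case: ltgtP (nondeg.2 i hi).1. Qed.

Lemma p32_lt0E i : (1 <= i <= 2 * m)%N -> (P32 i < 0) = (p32bound < i)%N.
Proof. by move=> hi; rewrite ltnNge -p32_gt0E //; case: ltgtP (nondeg.2 i hi).2. Qed.

Lemma dval_expE i : (1 <= i <= 2 * m)%N ->
  dval_exp i = sign_exp m qbound p31bound p32bound i.
Proof.
by move=> hi; rewrite /dval_exp qneg_countE // p31_lt0E // p32_lt0E // /sign_exp /negp; lia.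
Qed.

Lemma sgr_dval i : (1 <= i <= 2 * m)%N -> Num.sg (D i) = (-1) ^+ dval_exp i.
Proof.
move=> hi; have [q0 p0] := nondeg; have [p31_0 p32_0] := p0 i hi.
have sgr_sign (x : R) : x != 0 -> Num.sg x = (-1) ^+ (x < 0)%R.
  by case: ltgtP => // x0 _; [rewrite ltr0_sg|rewrite gtr0_sg].
have c_after : Num.sg (\prod_((i + 1)%N <= k < (2 * m).+1) (c i - c k)) = 1.
  rewrite gtr0_sg // big_nat_cond prodr_gt0 // => k /andP[hk _].
  by rewrite subr_gt0 ltr_c //; lia.
have c_before : Num.sg (\prod_(1 <= k < i) (c i - c k)) = (-1) ^+ (i - 1).
  rewrite sgr_prod_nat => [|k hk _]; last by rewrite subr_eq0 lt_eqF // ltr_c //; lia.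
  rewrite big_nat_cond (eq_bigr (fun _ => 1%N)) => [|k /andP[hk _]].
    by rewrite -big_nat_cond sum_nat_const_nat muln1.
  by rewrite subr_lt0 ltr_c //; lia.
have q_all : Num.sg (\prod_((2 * m + 1 - i)%N <= k < (2 * m).+1 | k != i) Q i k) *
             Num.sg (\prod_(1 <= k < (2 * m - i).+1 | k != i) Q i k) = (-1) ^+ qneg_count i.
  rewrite !sgr_prod_nat; try by move=> k hk ki; apply: q0 => //; lia.
  rewrite -exprD addnC (_ : (2 * m - i).+1 = 2 * m + 1 - i)%N; last by lia.
  by rewrite -big_cat_nat //; lia.
have p_sign : Num.sg (if (i <= m)%N then P31 i / P32 i else P31 i * P32 i) =
              (-1) ^+ ((P31 i < 0)%R + (P32 i < 0)%R)%N.
  by case: ifP => _; rewrite sgrM ?sgrV !sgr_sign // exprD.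
rewrite /dval !sgrM !sgrV c_after c_before p_sign /dval_exp !exprD -q_all.
by rewrite mul1r !mulrA.
Qed.

Lemma rest1_of_bounds : p31bound = (m - 1)%N -> p32bound = (2 * m - 1)%N ->
  antidiag qbound (2 * m - 1) 1 (m - 1) -> rest1 m a1 a2 b1 b2 b3 c.
Proof.
move=> hA hB hT; rewrite /rest1 /=.
split; rewrite ?p31_gt0E ?p31_lt0E ?p32_gt0E ?p32_lt0E; try lia.
by move=> i hi; have := hT i hi; rewrite q_gt0E ?q_lt0E; lia.
Qed.

Lemma rest2_of_bounds : p31bound = 0%N -> p32bound = m ->
  antidiag qbound (2 * m) 1 (m - 1) -> (qbound m <= m)%N -> rest2 m a1 a2 b1 b2 b3 c.
Proof.
move=> hA hB hT hm; rewrite /rest2 /=.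
split; rewrite ?p31_gt0E ?p31_lt0E ?p32_gt0E ?p32_lt0E ?q_lt0E; try lia.
by move=> i hi; have := hT i hi; rewrite q_gt0E ?q_lt0E; lia.
Qed.

Lemma rest3_of_bounds : p31bound = 0%N -> p32bound = m ->
  antidiag qbound (2 * m + 1) 1 m -> rest3 m a1 a2 b1 b2 b3 c.
Proof.
move=> hA hB hT; rewrite /rest3 /=.
have := hT m ltac:(lia).
split; rewrite ?p31_gt0E ?p31_lt0E ?p32_gt0E ?p32_lt0E ?q_gt0E; try lia.
move=> i hi; have := hT i ltac:(lia); have := hT (i + 1)%N ltac:(lia).
by rewrite q_gt0E ?q_lt0E; lia.
Qed.

Lemma rest4_of_bounds : p31bound = 1%N -> p32bound = (m + 1)%N ->
  antidiag qbound (2 * m + 2) 2 m -> (qbound (m + 1) <= m + 1)%N -> rest4 m a1 a2 b1 b2 b3 c.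
Proof.
move=> hA hB hT hm; rewrite /rest4 /=.
split; rewrite ?p31_gt0E ?p31_lt0E ?p32_gt0E ?p32_lt0E; try lia.
move=> i hi; have := hT i hi.
have : (qbound (i + 1) + (i + 1) <= 2 * m + 2)%N.
  by case: (ltnP i m) => him; [rewrite hT //; lia|rewrite (_ : i = m) //; lia].
by rewrite q_gt0E ?q_lt0E; lia.
Qed.

Lemma rest5_of_bounds : p31bound = m -> p32bound = (2 * m)%N ->
  antidiag qbound (2 * m + 1) 1 m -> rest5 m a1 a2 b1 b2 b3 c.
Proof.
move=> hA hB hT; rewrite /rest5 /=.
have := hT m ltac:(lia).
split; rewrite ?p31_gt0E ?p31_lt0E ?p32_gt0E ?p32_lt0E ?q_gt0E; try lia.
move=> i hi; have := hT i ltac:(lia); have := hT (i + 1)%N ltac:(lia).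
by rewrite q_gt0E ?q_lt0E; lia.
Qed.

Lemma rest6_of_bounds : p31bound = m -> p32bound = (2 * m)%N ->
  antidiag qbound (2 * m) 1 (m - 1) -> (qbound m <= m)%N -> rest6 m a1 a2 b1 b2 b3 c.
Proof.
move=> hA hB hT hm; rewrite /rest6 /=.
split; rewrite ?p31_gt0E ?p31_lt0E ?p32_gt0E ?p32_lt0E ?q_lt0E; try lia.
by move=> i hi; have := hT i hi; rewrite q_gt0E ?q_lt0E; lia.
Qed.

End Nondegenerate.

Lemma q_gt0_le [i0 k0 i k] : 0 < Q i0 k0 -> (1 <= i <= i0)%N -> (i0 <= 2 * m)%N ->
  (1 <= k <= k0)%N -> (k0 <= 2 * m)%N -> 0 < Q i k.
Proof. by move=> /lt_le_trans q_gt0 *; apply: q_gt0; apply: ler_q. Qed.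

Lemma q_lt0_ge [i0 k0 i k] : Q i0 k0 < 0 -> (1 <= i0 <= i)%N -> (i <= 2 * m)%N ->
  (1 <= k0 <= k)%N -> (k <= 2 * m)%N -> Q i k < 0.
Proof. by move=> /(le_lt_trans _) q_lt0 *; apply: q_lt0; apply: ler_q. Qed.

Definition q_antidiag_pattern N := forall i k,
  (1 <= i <= 2 * m)%N -> (1 <= k <= 2 * m)%N -> k != i ->
  ((i + k <= N)%N -> 0 < Q i k) /\ ((N < i + k)%N -> Q i k < 0).

Lemma q_antidiag_pattern_lt N : (forall i k, (1 <= i)%N -> (i < k <= 2 * m)%N ->
  ((i + k <= N)%N -> 0 < Q i k) /\ ((N < i + k)%N -> Q i k < 0)) -> q_antidiag_pattern N.
Proof.
move=> q_lt i k hi hk ki; case: (ltngtP i k) => ik; first by apply: q_lt; lia.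
  by rewrite qC addnC; apply: q_lt; lia.
by rewrite ik eqxx in ki.
Qed.

Definition sign_threshold (f : nat -> R) P := forall i, (1 <= i <= 2 * m)%N ->
  ((i <= P)%N -> 0 < f i) /\ ((P < i)%N -> f i < 0).

Lemma sign_threshold_antitone (f : nat -> R) P :
  (forall i i', (1 <= i <= i')%N -> (i' <= 2 * m)%N -> f i' <= f i) -> (P <= 2 * m)%N ->
  ((1 <= P)%N -> 0 < f P) -> ((P < 2 * m)%N -> f P.+1 < 0) -> sign_threshold f P.
Proof.
move=> f_anti P_le fP fP1 i hi; split=> iP.
  by apply: lt_le_trans (fP _) (f_anti _ _ _ _); lia.
by apply: le_lt_trans (f_anti _ _ _ _) (fP1 _); lia.
Qed.

Lemma sign_threshold_lt0E [f : nat -> R] [P : nat] : sign_threshold f P ->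
  forall i, (1 <= i <= 2 * m)%N -> f i != 0 /\ (f i < 0) = (P < i)%N.
Proof.
move=> fP i /fP[f_gt0 f_lt0]; case: (leqP i P) => iP.
  by have f_pos := f_gt0 iP; rewrite gt_eqF // lt_gtF // ltnNge iP.
by have f_neg := f_lt0 iP; rewrite lt_eqF // f_neg iP.
Qed.

(* 2m - (N - i) - [N - i < i] is the number of k <> i in [1, 2m] with i + k > N. *)
Lemma sgr_dval_of_patterns N A B (e : bool) : q_antidiag_pattern N ->
  sign_threshold P31 A -> sign_threshold P32 B ->
  (forall i, (1 <= i <= 2 * m)%N ->
     odd (i - 1 + (2 * m - (N - i) - (N - i < i)) + (A < i) + (B < i)) = e) ->
  forall i, (1 <= i <= 2 * m)%N -> Num.sg (D i) = (-1) ^+ e.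
Proof.
move=> qN p31A p32B parity.
have nondeg : nondegenerate.
  split=> [i k hi hk ki|i hi]; last first.
    by split; [case: (sign_threshold_lt0E p31A i hi)|case: (sign_threshold_lt0E p32B i hi)].
  have [q_gt0 q_lt0] := qN i k hi hk ki.
  by case: (leqP (i + k) N) => ikN; [rewrite gt_eqF ?q_gt0|rewrite lt_eqF ?q_lt0].
move=> i hi; rewrite sgr_dval // -signr_odd -(parity i hi) /dval_exp.
have [_ ->] := sign_threshold_lt0E p31A i hi; have [_ ->] := sign_threshold_lt0E p32B i hi.
suff -> : qneg_count i = (2 * m - (N - i) - (N - i < i))%N by [].
rewrite /qneg_count -sum_nat_gt_D1 // big_nat_cond [RHS]big_nat_cond.
apply: eq_bigr => k /andP[hk ki]; have [q_gt0 q_lt0] := qN i k hi hk ki.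
case: (leqP (i + k) N) => ikN.
  by rewrite lt_gtF ?q_gt0 //; lia.
by rewrite q_lt0 //; lia.
Qed.

Lemma q_antidiag_pattern_2m :
  (forall i, (1 <= i <= m - 1)%N -> 0 < Q i (2 * m - i) /\ Q i (2 * m + 1 - i) < 0) ->
  Q m (m + 1) < 0 -> q_antidiag_pattern (2 * m).
Proof.
move=> q_sgn qm; apply: q_antidiag_pattern_lt => i k i1 ik; split=> ikN.
  by have [q_gt0 _] := q_sgn i ltac:(lia); apply: (q_gt0_le q_gt0); lia.
case: (leqP i (m - 1)) => hi; last by apply: (q_lt0_ge qm); lia.
by have [_ q_lt0] := q_sgn i ltac:(lia); apply: (q_lt0_ge q_lt0); lia.
Qed.

Lemma q_antidiag_pattern_2m_sub1 :
  (forall i, (1 <= i <= m - 1)%N -> 0 < Q i (2 * m - 1 - i) /\ Q i (2 * m - i) < 0) ->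
  q_antidiag_pattern (2 * m - 1).
Proof.
move=> q_sgn; apply: q_antidiag_pattern_lt => i k i1 ik; split=> ikN.
  by have [q_gt0 _] := q_sgn i ltac:(lia); apply: (q_gt0_le q_gt0); lia.
have [_ q_lt0] := q_sgn (minn i (m - 1)) ltac:(lia).
by apply: (q_lt0_ge q_lt0); lia.
Qed.

Lemma q_antidiag_pattern_2m_add1 :
  (forall i, (1 <= i <= m - 1)%N -> 0 < Q i (2 * m + 1 - i) /\ Q (i + 1) (2 * m + 1 - i) < 0) ->
  0 < Q m (m + 1) -> q_antidiag_pattern (2 * m + 1).
Proof.
move=> q_sgn qm; apply: q_antidiag_pattern_lt => i k i1 ik; split=> ikN.
  case: (leqP i (m - 1)) => hi; last by apply: (q_gt0_le qm); lia.
  by have [q_gt0 _] := q_sgn i ltac:(lia); apply: (q_gt0_le q_gt0); lia.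
have [_ q_lt0] := q_sgn (minn (i - 1) (m - 1)) ltac:(lia).
by apply: (q_lt0_ge q_lt0); lia.
Qed.

Lemma q_antidiag_pattern_2m_add2 :
  (forall i, (2 <= i <= m)%N -> 0 < Q i (2 * m + 2 - i) /\ Q (i + 1) (2 * m + 2 - i) < 0) ->
  q_antidiag_pattern (2 * m + 2).
Proof.
move=> q_sgn; apply: q_antidiag_pattern_lt => i k i1 ik; split=> ikN.
  have [q_gt0 _] := q_sgn (maxn i 2) ltac:(lia).
  by apply: (q_gt0_le q_gt0); lia.
have [_ q_lt0] := q_sgn (minn (i - 1) m) ltac:(lia).
by apply: (q_lt0_ge q_lt0); lia.
Qed.

Lemma p31_threshold P : (P <= 2 * m)%N -> ((1 <= P)%N -> 0 < P31 P) ->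
  ((P < 2 * m)%N -> P31 P.+1 < 0) -> sign_threshold P31 P.
Proof. exact: sign_threshold_antitone ler_p31. Qed.

Lemma p32_threshold P : (P <= 2 * m)%N -> ((1 <= P)%N -> 0 < P32 P) ->
  ((P < 2 * m)%N -> P32 P.+1 < 0) -> sign_threshold P32 P.
Proof. exact: sign_threshold_antitone ler_p32. Qed.

Lemma sgr_dval_case1 : bord1 m a1 a2 b1 b2 b3 c -> rest1 m a1 a2 b1 b2 b3 c ->
  forall i, (1 <= i <= 2 * m)%N -> Num.sg (D i) = Num.sg ((b1 - b2) * (b1 - b3)).
Proof.
rewrite /bord1 /rest1 /= => -[b31 b23] [p31_pos p31_neg p32_pos p32_neg q_sgn] i hi.
rewrite (@sgr_dval_of_patterns (2 * m - 1) (m - 1) (2 * m - 1) false) //.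
- by rewrite expr0 gtr0_sg //; nra.
- exact: q_antidiag_pattern_2m_sub1.
- by apply: p31_threshold => //; [lia|rewrite subn1 prednK //; lia].
- by apply: p32_threshold => //; [lia|rewrite subn1 prednK //; lia].
- by move=> j hj; lia.
Qed.

Lemma sgr_dval_case2 : bord2 m a1 a2 b1 b2 b3 c -> rest2 m a1 a2 b1 b2 b3 c ->
  forall i, (1 <= i <= 2 * m)%N -> Num.sg (D i) = Num.sg ((b1 - b2) * (b1 - b3)).
Proof.
rewrite /bord2 /rest2 /= => -[b21 b32] [p31_neg p32_pos p32_neg q_sgn qm] i hi.
rewrite (@sgr_dval_of_patterns (2 * m) 0 m false) //.
- by rewrite expr0 gtr0_sg //; nra.
- exact: q_antidiag_pattern_2m.
- by apply: p31_threshold.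
- by apply: p32_threshold => //; [lia|rewrite -addn1].
- by move=> j hj; lia.
Qed.

Lemma sgr_dval_case3 : bord3 m a1 a2 b1 b2 b3 c -> rest3 m a1 a2 b1 b2 b3 c ->
  forall i, (1 <= i <= 2 * m)%N -> Num.sg (D i) = Num.sg ((b1 - b2) * (b1 - b3)).
Proof.
rewrite /bord3 /rest3 /= => -[b12 b31] [p31_neg p32_pos p32_neg q_sgn qm] i hi.
rewrite (@sgr_dval_of_patterns (2 * m + 1) 0 m true) //.
- by rewrite expr1 ltr0_sg //; nra.
- exact: q_antidiag_pattern_2m_add1.
- by apply: p31_threshold.
- by apply: p32_threshold => //; [lia|rewrite -addn1].
- by move=> j hj; lia.
Qed.

Lemma sgr_dval_case4 : bord4 m a1 a2 b1 b2 b3 c -> rest4 m a1 a2 b1 b2 b3 c ->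
  forall i, (1 <= i <= 2 * m)%N -> Num.sg (D i) = Num.sg ((b1 - b2) * (b1 - b3)).
Proof.
rewrite /bord4 /rest4 /= => -[b32 b13] [p31_pos p31_neg p32_pos p32_neg q_sgn] i hi.
rewrite (@sgr_dval_of_patterns (2 * m + 2) 1 (m + 1) false) //.
- by rewrite expr0 gtr0_sg //; nra.
- exact: q_antidiag_pattern_2m_add2.
- by apply: p31_threshold => //; lia.
- by apply: p32_threshold => //; [lia|rewrite -addn1 -addnA].
- by move=> j hj; lia.
Qed.

Lemma sgr_dval_case5 : bord5 m a1 a2 b1 b2 b3 c -> rest5 m a1 a2 b1 b2 b3 c ->
  forall i, (1 <= i <= 2 * m)%N -> Num.sg (D i) = Num.sg ((b1 - b2) * (b1 - b3)).
Proof.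
rewrite /bord5 /rest5 /= => -[b23 b12] [p31_pos p31_neg p32_pos q_sgn qm] i hi.
rewrite (@sgr_dval_of_patterns (2 * m + 1) m (2 * m) false) //.
- by rewrite expr0 gtr0_sg //; nra.
- exact: q_antidiag_pattern_2m_add1.
- by apply: p31_threshold => //; [lia|rewrite -addn1].
- by apply: p32_threshold => //; lia.
- by move=> j hj; lia.
Qed.

Lemma sgr_dval_case6 : bord6 m a1 a2 b1 b2 b3 c -> rest6 m a1 a2 b1 b2 b3 c ->
  forall i, (1 <= i <= 2 * m)%N -> Num.sg (D i) = Num.sg ((b1 - b2) * (b1 - b3)).
Proof.
rewrite /bord6 /rest6 /= => -[b13 b21] [p31_pos p31_neg p32_pos q_sgn qm] i hi.
rewrite (@sgr_dval_of_patterns (2 * m) m (2 * m) true) //.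
- by rewrite expr1 ltr0_sg //; nra.
- exact: q_antidiag_pattern_2m.
- by apply: p31_threshold => //; [lia|rewrite -addn1].
- by apply: p32_threshold => //; lia.
- by move=> j hj; lia.
Qed.

Lemma rest_of_same_sign_dval :
  (forall i, (1 <= i <= 2 * m)%N -> 0 < D i) \/ (forall i, (1 <= i <= 2 * m)%N -> D i < 0) ->
  rest1 m a1 a2 b1 b2 b3 c \/ rest2 m a1 a2 b1 b2 b3 c \/ rest3 m a1 a2 b1 b2 b3 c \/
  rest4 m a1 a2 b1 b2 b3 c \/ rest5 m a1 a2 b1 b2 b3 c \/ rest6 m a1 a2 b1 b2 b3 c.
Proof.
move=> /same_sign_sgr[s s0 sgD].
have nondeg : nondegenerate by apply: nondegenerate_of_dval => i hi; rewrite -sgr_eq0 sgD.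
have parity i : (1 <= i <= 2 * m)%N ->
    odd (sign_exp m qbound p31bound p32bound i) = odd (sign_exp m qbound p31bound p32bound 1).
  move=> hi; rewrite -!dval_expE //; last by lia.
  apply: (@signr_inj R); rewrite /= !signr_odd -!sgr_dval //; last by lia.
  by apply: etrans (sgD _ hi) (esym (sgD _ _)); lia.
have := @T_classification m qbound p31bound p32bound m_ge2
  qbound_le qbound_sym p31bound_le_p32bound p32bound_le parity.
case=> [[]|[[]|[[]|[[]|[[]|[]]]]]] *.
- by left; apply: rest1_of_bounds.
- by right; left; apply: rest2_of_bounds.
- by do 2 right; left; apply: rest3_of_bounds.
- by do 3 right; left; apply: rest4_of_bounds.
- by do 4 right; left; apply: rest5_of_bounds.
- by do 5 right; apply: rest6_of_bounds.
Qed.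

Section Balance.
Hypothesis balance : m%:R * a1 + m%:R * a2 =
  b1 + (m - 1)%:R * b2 + m%:R * b3 + \sum_(1 <= i < (2 * m).+1) c i.

Let csum := \sum_(1 <= i < (2 * m).+1) c i.

Lemma csum_split : csum = \sum_(1 <= i < m.+1) c i + \sum_(m.+1 <= i < (2 * m).+1) c i.
Proof. by rewrite /csum (@big_cat_nat _ _ _ m.+1) //; lia. Qed.

Lemma sum_c_antidiag2m1 : \sum_(1 <= i < m.+1) (c i + c (2 * m + 1 - i)%N) = csum.
Proof.
by rewrite big_split /= csum_split (@sum_nat_reflect _ c (2 * m + 1) _ _ m.+1 (2 * m).+1) //; lia.
Qed.

Lemma sum_c_antidiag2m : \sum_(1 <= i < m) (c i + c (2 * m - i)%N) + c m + c (2 * m)%N = csum.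
Proof.
rewrite big_split /= (@sum_nat_reflect _ c (2 * m) _ _ m.+1 (2 * m)) ?csum_split; try lia.
by rewrite (big_nat_recr m) ?(big_nat_recr (2 * m)) /=; [lra|lia|lia].
Qed.

Lemma sum_c_antidiag2m2 :
  \sum_(2 <= i < m.+1) (c i + c (2 * m + 2 - i)%N) + c 1%N + c (m + 1)%N = csum.
Proof.
rewrite big_split /= (@sum_nat_reflect _ c (2 * m + 2) _ _ m.+2 (2 * m).+1) ?csum_split; try lia.
rewrite (@big_ltn _ _ _ 1) ?(@big_ltn _ _ _ m.+1) ?addn1 /=; try lia.
lra.
Qed.

Lemma sum_q (F G : nat -> nat) a b :
  \sum_(a <= i < b) Q (F i) (G i) =
  \sum_(a <= i < b) (c (F i) + c (G i)) + (b - a)%:R * (b2 + b3 - a1 - a2).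
Proof.
rewrite mulr_natl -sumr_const_nat -big_split /=.
by apply: eq_bigr => i _; rewrite /q; ring.
Qed.

Lemma natr_m_sub1 : (m - 1)%:R = m%:R - 1 :> R.
Proof. by rewrite natrB //; lia. Qed.

Lemma sum_q_antidiag2m1 : \sum_(1 <= i < m.+1) Q i (2 * m + 1 - i)%N = b2 - b1.
Proof.
rewrite (@sum_q id) sum_c_antidiag2m1 subSS subn0.
by move: balance; rewrite natr_m_sub1 /csum; lra.
Qed.

Lemma sum_q_antidiag2m1_recr :
  \sum_(1 <= i < m) Q i (2 * m + 1 - i)%N + Q m (m + 1)%N = b2 - b1.
Proof.
rewrite -sum_q_antidiag2m1 big_nat_recr /=; last by lia.
by rewrite (_ : 2 * m + 1 - m = m + 1)%N //; lia.
Qed.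

Lemma sum_q_antidiag2m :
  \sum_(1 <= i < m) Q i (2 * m - i)%N + P31 m + P32 (2 * m)%N = b3 - b1.
Proof.
rewrite (@sum_q id); have := sum_c_antidiag2m; rewrite /p31 /p32 /csum natr_m_sub1 /=.
by move: balance; rewrite natr_m_sub1; lra.
Qed.

Lemma sum_q_antidiag2m2 :
  \sum_(2 <= i < m.+1) Q i (2 * m + 2 - i)%N + P31 1%N + P32 (m + 1)%N = b3 - b1.
Proof.
rewrite (@sum_q id); have := sum_c_antidiag2m2.
rewrite /p31 /p32 /csum /= (_ : m.+1 - 2 = m - 1)%N; last by lia.
by move: balance; rewrite natr_m_sub1; lra.
Qed.

Lemma sum_q_antidiag2m2_shift :
  \sum_(1 <= i < m) Q (i + 1)%N (2 * m + 1 - i)%N + P31 1%N + P32 (m + 1)%N = b3 - b1.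
Proof.
rewrite -sum_q_antidiag2m2 -[2%N]/(1 + 1)%N big_addn subn1 /=.
by congr (_ + _ + _); apply: eq_big_nat => i hi; congr q; lia.
Qed.

Lemma bord_of_rest1 : rest1 m a1 a2 b1 b2 b3 c -> bord1 m a1 a2 b1 b2 b3 c.
Proof.
rewrite /rest1 /bord1 /= => -[p31_pos p31_neg p32_pos p32_neg q_sgn]; split.
  have : \sum_(1 <= i < m) Q i (2 * m - i)%N < 0.
    by apply: sumr_nat_lt0 => [|i hi]; [lia|case: (q_sgn i ltac:(lia))].
  by have := sum_q_antidiag2m; lra.
have [_] := q_sgn (m - 1)%N ltac:(lia).
rewrite q_p31_p32 (_ : 2 * m - (m - 1) = m + 1)%N; last by lia.
by have := ler_p32 (m + 1) (2 * m - 1) ltac:(lia) ltac:(lia); lra.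
Qed.

Lemma bord_of_rest2 : rest2 m a1 a2 b1 b2 b3 c -> bord2 m a1 a2 b1 b2 b3 c.
Proof.
rewrite /rest2 /bord2 /= => -[p31_neg p32_pos p32_neg q_sgn qm]; split.
  have : \sum_(1 <= i < m) Q i (2 * m + 1 - i)%N < 0.
    by apply: sumr_nat_lt0 => [|i hi]; [lia|case: (q_sgn i ltac:(lia))].
  by have := sum_q_antidiag2m1_recr; lra.
have [+ _] := q_sgn 1%N ltac:(lia); rewrite q_p31_p32.
by have := ler_p32 (m + 1) (2 * m - 1) ltac:(lia) ltac:(lia); lra.
Qed.

Lemma bord_of_rest3 : rest3 m a1 a2 b1 b2 b3 c -> bord3 m a1 a2 b1 b2 b3 c.
Proof.
rewrite /rest3 /bord3 /= => -[p31_neg p32_pos p32_neg q_sgn qm]; split.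
  have : 0 < \sum_(1 <= i < m) Q i (2 * m + 1 - i)%N.
    by apply: sumr_nat_gt0 => [|i hi]; [lia|case: (q_sgn i ltac:(lia))].
  by have := sum_q_antidiag2m1_recr; lra.
have : \sum_(1 <= i < m) Q (i + 1)%N (2 * m + 1 - i)%N < 0.
  by apply: sumr_nat_lt0 => [|i hi]; [lia|case: (q_sgn i ltac:(lia))].
by have := sum_q_antidiag2m2_shift; lra.
Qed.

Lemma bord_of_rest4 : rest4 m a1 a2 b1 b2 b3 c -> bord4 m a1 a2 b1 b2 b3 c.
Proof.
rewrite /rest4 /bord4 /= => -[p31_pos p31_neg p32_pos p32_neg q_sgn]; split.
  have [+ _] := q_sgn 2%N ltac:(lia); rewrite q_p31_p32 (_ : 2 * m + 2 - 2 = 2 * m)%N; last by lia.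
  by have := ler_p32 (m + 2) (2 * m) ltac:(lia) ltac:(lia); lra.
have : 0 < \sum_(2 <= i < m.+1) Q i (2 * m + 2 - i)%N.
  by apply: sumr_nat_gt0 => [|i hi]; [lia|case: (q_sgn i ltac:(lia))].
by have := sum_q_antidiag2m2; lra.
Qed.

Lemma bord_of_rest5 : rest5 m a1 a2 b1 b2 b3 c -> bord5 m a1 a2 b1 b2 b3 c.
Proof.
rewrite /rest5 /bord5 /= => -[p31_pos p31_neg p32_pos q_sgn qm]; split.
  have [_] := q_sgn 1%N ltac:(lia); rewrite q_p31_p32 (_ : 2 * m + 1 - 1 = 2 * m)%N; last by lia.
  by have := ler_p31 (1 + 1) m ltac:(lia) ltac:(lia); lra.
have : 0 < \sum_(1 <= i < m) Q i (2 * m + 1 - i)%N.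
  by apply: sumr_nat_gt0 => [|i hi]; [lia|case: (q_sgn i ltac:(lia))].
by have := sum_q_antidiag2m1_recr; lra.
Qed.

Lemma bord_of_rest6 : rest6 m a1 a2 b1 b2 b3 c -> bord6 m a1 a2 b1 b2 b3 c.
Proof.
rewrite /rest6 /bord6 /= => -[p31_pos p31_neg p32_pos q_sgn qm]; split.
  have : 0 < \sum_(1 <= i < m) Q i (2 * m - i)%N.
    by apply: sumr_nat_gt0 => [|i hi]; [lia|case: (q_sgn i ltac:(lia))].
  by have := sum_q_antidiag2m; lra.
have : \sum_(1 <= i < m) Q i (2 * m + 1 - i)%N < 0.
  by apply: sumr_nat_lt0 => [|i hi]; [lia|case: (q_sgn i ltac:(lia))].
by have := sum_q_antidiag2m1_recr; lra.
Qed.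

Definition six_systems :=
  (bord1 m a1 a2 b1 b2 b3 c /\ rest1 m a1 a2 b1 b2 b3 c) \/
  (bord2 m a1 a2 b1 b2 b3 c /\ rest2 m a1 a2 b1 b2 b3 c) \/
  (bord3 m a1 a2 b1 b2 b3 c /\ rest3 m a1 a2 b1 b2 b3 c) \/
  (bord4 m a1 a2 b1 b2 b3 c /\ rest4 m a1 a2 b1 b2 b3 c) \/
  (bord5 m a1 a2 b1 b2 b3 c /\ rest5 m a1 a2 b1 b2 b3 c) \/
  (bord6 m a1 a2 b1 b2 b3 c /\ rest6 m a1 a2 b1 b2 b3 c).

Lemma six_systems_of_same_sign_dval :
  (forall i, (1 <= i <= 2 * m)%N -> 0 < D i) \/ (forall i, (1 <= i <= 2 * m)%N -> D i < 0) ->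
  six_systems.
Proof.
move/rest_of_same_sign_dval => [r|[r|[r|[r|[r|r]]]]].
- by left; split=> //; apply: bord_of_rest1.
- by right; left; split=> //; apply: bord_of_rest2.
- by do 2 right; left; split=> //; apply: bord_of_rest3.
- by do 3 right; left; split=> //; apply: bord_of_rest4.
- by do 4 right; left; split=> //; apply: bord_of_rest5.
- by do 5 right; split=> //; apply: bord_of_rest6.
Qed.

Lemma sgr_dval_six_systems : six_systems ->
  forall i, (1 <= i <= 2 * m)%N -> Num.sg (D i) = Num.sg ((b1 - b2) * (b1 - b3)).
Proof.
case=> [[]|[[]|[[]|[[]|[[]|[]]]]]].
- exact: sgr_dval_case1.
- exact: sgr_dval_case2.
- exact: sgr_dval_case3.
- exact: sgr_dval_case4.
- exact: sgr_dval_case5.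
- exact: sgr_dval_case6.
Qed.

Lemma same_sign_dval_iff_six_systems : b1 != b2 -> b1 != b3 ->
  (forall i, (1 <= i <= 2 * m)%N -> 0 < D i) \/ (forall i, (1 <= i <= 2 * m)%N -> D i < 0) <->
  six_systems.
Proof.
move=> b12 b13; split; first exact: six_systems_of_same_sign_dval.
move/sgr_dval_six_systems => sgD.
have [p_gt0|p_lt0] : 0 < (b1 - b2) * (b1 - b3) \/ (b1 - b2) * (b1 - b3) < 0.
  by apply/orP; rewrite -neq_lt eq_sym mulf_neq0 // subr_eq0.
- by left=> i /sgD; rewrite (gtr0_sg p_gt0) => /eqP; rewrite sgr_cp0.
- by right=> i /sgD; rewrite (ltr0_sg p_lt0) => /eqP; rewrite sgr_cp0.
Qed.

Lemma sign_of_scaled_dval_gt0 (eps : R) : eps = 1 \/ eps = -1 ->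
  (forall i, (1 <= i <= 2 * m)%N -> 0 < eps * D i) -> eps = Num.sg ((b1 - b2) * (b1 - b3)).
Proof.
move=> eps_sgn epsD; have h1 : (1 <= 1 <= 2 * m)%N by lia.
rewrite -(sgr_dval_six_systems _ _ h1); last first.
  apply: six_systems_of_same_sign_dval.
  by case: eps_sgn epsD => -> epsD; [left|right] => i /epsD; rewrite ?mul1r ?mulN1r ?oppr_gt0.
by case: eps_sgn epsD => -> /(_ 1%N h1); rewrite ?mul1r ?mulN1r ?oppr_gt0 => D1;
  [rewrite gtr0_sg|rewrite ltr0_sg].
Qed.

End Balance.

End GramSigns.

Theorem theorem2p14 (R : realFieldType) (m : nat) (a1 a2 b1 b2 b3 : R)
  (c : nat -> R) (v : nat -> 'cV[R]_(2 * m)) (G : 'M[R]_(2 * m)) :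
  (2 <= m)%N ->
  a1 > a2 ->
  b1 != b2 -> b1 != b3 -> b2 != b3 ->
  (forall i, (1 <= i < 2 * m)%N -> c i > c i.+1) ->
  m%:R * a1 + m%:R * a2 =
    b1 + (m - 1)%:R * b2 + m%:R * b3 + \sum_(1 <= i < (2 * m).+1) c i ->
  (* well-definedness: no denominator vanishes *)
  (forall i k, (1 <= i <= 2 * m)%N -> (1 <= k <= 2 * m - i)%N -> k != i ->
     q m a1 a2 b1 b2 b3 c i k != 0) ->
  (forall i, (1 <= i <= m)%N -> p32 m a1 a2 b1 b2 b3 c i != 0) ->
  (* v_i: eigenvector of C for c_i, first 2m-i coordinates 0, (2m+1-i)-th = 1 *)
  (forall i, (1 <= i <= 2 * m)%N ->
     [/\ Cmat m a1 a2 b1 b2 b3 c *m v i = c i *: v i,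
         (forall r : 'I_(2 * m), (r < 2 * m - i)%N -> v i r 0 = 0) &
         (forall r : 'I_(2 * m), nat_of_ord r = (2 * m - i)%N -> v i r 0 = 1)]) ->
  (* the form: <v_i, v_j> = 0 (i <> j), <v_i, v_i> = dval i *)
  (forall i j, (1 <= i <= 2 * m)%N -> (1 <= j <= 2 * m)%N ->
     bform G (v i) (v j) = if i == j then dval m a1 a2 b1 b2 b3 c i else 0) ->
  [/\ (sign_definite G <->
        (bord1 m a1 a2 b1 b2 b3 c /\ rest1 m a1 a2 b1 b2 b3 c) \/
        (bord2 m a1 a2 b1 b2 b3 c /\ rest2 m a1 a2 b1 b2 b3 c) \/
        (bord3 m a1 a2 b1 b2 b3 c /\ rest3 m a1 a2 b1 b2 b3 c) \/
        (bord4 m a1 a2 b1 b2 b3 c /\ rest4 m a1 a2 b1 b2 b3 c) \/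
        (bord5 m a1 a2 b1 b2 b3 c /\ rest5 m a1 a2 b1 b2 b3 c) \/
        (bord6 m a1 a2 b1 b2 b3 c /\ rest6 m a1 a2 b1 b2 b3 c)),
      (forall eps : R, eps = 1 \/ eps = -1 ->
         pos_definite (eps *: G) -> eps = Num.sg ((b1 - b2) * (b1 - b3))) &
      ((rest1 m a1 a2 b1 b2 b3 c -> bord1 m a1 a2 b1 b2 b3 c) /\
       (rest2 m a1 a2 b1 b2 b3 c -> bord2 m a1 a2 b1 b2 b3 c) /\
       (rest3 m a1 a2 b1 b2 b3 c -> bord3 m a1 a2 b1 b2 b3 c) /\
       (rest4 m a1 a2 b1 b2 b3 c -> bord4 m a1 a2 b1 b2 b3 c) /\
       (rest5 m a1 a2 b1 b2 b3 c -> bord5 m a1 a2 b1 b2 b3 c) /\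
       (rest6 m a1 a2 b1 b2 b3 c -> bord6 m a1 a2 b1 b2 b3 c))].
Proof.
move=> m_ge2 a2_lt_a1 b12 b13 _ c_decr balance _ _ v_eig Gv.
have [v_zero v_one] : (forall i, (1 <= i <= 2 * m)%N ->
    forall r : 'I_(2 * m), (r < 2 * m - i)%N -> v i r 0 = 0) /\
  (forall i, (1 <= i <= 2 * m)%N ->
    forall r : 'I_(2 * m), nat_of_ord r = (2 * m - i)%N -> v i r 0 = 1).
  by split=> i /v_eig[].
split.
- rewrite (sign_definite_diagonalized v_zero v_one Gv).
  exact: same_sign_dval_iff_six_systems.
- move=> eps eps_sgn.
  rewrite (pos_definite_diagonalized v_zero v_one (diagonalizesZ eps Gv)).
  exact: sign_of_scaled_dval_gt0.
- split; [exact: bord_of_rest1|split; [exact: bord_of_rest2|split; [exact: bord_of_rest3|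
    split; [exact: bord_of_rest4|split; [exact: bord_of_rest5|exact: bord_of_rest6]]]]].
Qed.
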